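(* Let $T$ be a phylogenetic tree on a leaf set $X$ with $|X|\ge4$, equipped with the quartet metrization $w$. Then $w(e)\ge|X|-2$ for every edge $e$ of $T$.
   Context: A phylogenetic tree on $X$ is an unrooted tree whose leaves are bijectively labeled by $X$ and all of whose non-leaf nodes have degree 3. Each internal edge $e$ determines a partition of $X$ into four nonempty blocks $X_1,X_2,X_3,X_4$, where $e$ induces the split $X_1\cup X_2|X_3\cup X_4$ and the four edges adjacent to $e$ induce splits each separating one $X_i$ from the rest; the quartet metrization assigns $w(e)=|X_1||X_2|+|X_3||X_4|$. Each pendant edge $e$ incident to leaf $x$ determines a tripartition $(\{x\},X_1,X_2)$, where $X_1,X_2$ are the leaf sets separated by the two other edges at the non-leaf end of $e$; the quartet metrization assigns $w(e)=|X_1||X_2|$. *)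

From mathcomp Require Import all_boot.
Set Implicit Arguments. Unset Strict Implicit. Unset Printing Implicit Defensive.

Definition acyclic (V : finType) (E : rel V) : Prop :=
  forall p : seq V, uniq p -> 2 < size p -> ~~ cycle E p.

Definition is_tree (V : finType) (E : rel V) : Prop :=
  [/\ symmetric E, irreflexive E, (forall x y, connect E x y) & acyclic E].

Definition deg (V : finType) (E : rel V) (v : V) : nat := #|[set w | E v w]|.

Definition is_leaf (V : finType) (E : rel V) (v : V) : bool := deg E v == 1.

Definition phylo_tree (V X : finType) (E : rel V) (lab : X -> V) : Prop :=
  [/\ is_tree E, injective lab,
      (forall v, is_leaf E v <-> exists x, lab x = v)
    & (forall v, ~~ is_leaf E v -> deg E v = 3)].

Definition del_edge (V : finType) (E : rel V) (u v : V) : rel V :=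
  [rel x y | E x y && ~~ (((x == u) && (y == v)) || ((x == v) && (y == u)))].

Definition split_side (V : finType) (E : rel V) (u a : V) : {set V} :=
  [set y | connect (del_edge E u a) a y].

Definition nlab (V X : finType) (lab : X -> V) (S : {set V}) : nat :=
  #|[set x | lab x \in S]|.

(* Contribution of endpoint u of edge {u,v}: for the (unique, if u is internal)
   pair {a,b} of other neighbours of u, |X_a| * |X_b|; 0 if u is a leaf. *)
Definition half_w (V X : finType) (E : rel V) (lab : X -> V) (u v : V) : nat :=
  \sum_(S : {set V} | (S \subset [set a | E u a] :\ v) && (#|S| == 2))
     \prod_(a in S) nlab lab (split_side E u a).

Definition quartet_w (V X : finType) (E : rel V) (lab : X -> V) (u v : V) : nat :=
  half_w E lab u v + half_w E lab v u.

From mathcomp Require Import all_boot zify.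
Set Implicit Arguments. Unset Strict Implicit. Unset Printing Implicit Defensive.

(* Deleting an edge {u,v} splits the leaves into those on the side of u and
   those on the side of v.  At an internal endpoint u with further neighbours
   a and b, both branches contain a leaf, because in an acyclic graph a maximal
   simple path ends at a vertex of degree at most 1; hence |X_a|, |X_b| >= 1
   and |X_a| |X_b| >= |X_a| + |X_b| - 1.  At a leaf endpoint the contribution
   is 0 = 1 - 1.  Adding both endpoints, w(e) >= |X| - 2. *)

Lemma leq_addn_muln1 m n : 0 < m -> 0 < n -> m + n <= m * n + 1.
Proof. by move=> m_gt0 n_gt0; nia. Qed.

Section SimplePaths.
Variables (V : finType) (E : rel V).
Hypotheses (E_irr : irreflexive E) (E_acyclic : acyclic E).

Lemma acyclic_last_nbr_index x p w : uniq (x :: p) -> path E x p ->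
  w \in x :: p -> E (last x p) w -> (size p).-1 <= index w (x :: p).
Proof.
set q := x :: p => q_uniq q_path wq zw; rewrite leqNgt; apply/negP => w_early.
have wi : index w q < size q by rewrite index_mem.
have q_drop := drop_nth x wi; rewrite nth_index // in q_drop.
have long_cycle : 2 < size (drop (index w q) q).
  by rewrite size_drop; move: w_early; rewrite /q /=; lia.
have /negP[] := E_acyclic (drop_uniq (index w q) q_uniq) long_cycle.
have last_drop : last x q = last w (drop (index w q).+1 q).
  by rewrite -[in LHS](cat_take_drop (index w q) q) last_cat q_drop.
have : sorted E (drop (index w q) q) by apply: drop_sorted.
by rewrite q_drop /cycle rcons_path -last_drop zw andbT.
Qed.

Lemma exists_fresh_nbr x p : uniq (x :: p) -> path E x p ->
  1 < deg E (last x p) -> exists2 w, E (last x p) w & w \notin x :: p.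
Proof.
set z := last x p => p_uniq p_path deg_z.
have [w /andP[zw wq] | no_fresh] := pickP [pred w | E z w && (w \notin x :: p)].
  by exists w.
suff : [set w | E z w] \subset [set nth x (x :: p) (size p).-1].
  by move/subset_leq_card; rewrite cards1 -/(deg E z); move: deg_z; lia.
apply/subsetP => w; rewrite !inE => zw.
have wq : w \in x :: p by move: (no_fresh w); rewrite /= zw /= => /negbFE.
have wz : index w (x :: p) != size p.
  rewrite -(index_last p_uniq) -/z; apply: contraTneq zw.
  by move=> /(index_inj x wq (mem_last x p)) ->; rewrite E_irr.
have w_index : index w (x :: p) = (size p).-1.
  have := acyclic_last_nbr_index p_uniq p_path wq zw.
  have : index w (x :: p) < (size p).+1 by rewrite index_mem.
  by move: wz; lia.
by rewrite -w_index nth_index.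
Qed.

Lemma path_to_low_degree n x p : #|V| <= size p + n ->
  uniq (x :: p) -> path E x p ->
  exists q, [/\ uniq (x :: p ++ q), path E x (p ++ q)
             & deg E (last x (p ++ q)) <= 1].
Proof.
elim: n p => [|n IH] p small p_uniq p_path.
  have := max_card (mem (x :: p)).
  by rewrite (card_uniqP p_uniq) => /leq_trans/(_ small); rewrite addn0 ltnn.
have [low | high] := leqP (deg E (last x p)) 1.
  by exists [::]; rewrite cats0.
have [w zw wq] := exists_fresh_nbr p_uniq p_path high.
have [|||q [pq_uniq pq_path low]] := IH (rcons p w).
- by rewrite size_rcons; move: small; lia.
- by rewrite -rcons_cons rcons_uniq wq p_uniq.
- by rewrite rcons_path p_path.
by exists (w :: q); rewrite -cat_rcons.
Qed.

End SimplePaths.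

Section EdgeSides.
Variables (V : finType) (E : rel V).

Lemma path_del_edge u a x p : x != u -> u \notin p -> path E x p ->
  path (del_edge E u a) x p.
Proof.
elim: p x => [|y p IH] x //= xu; rewrite inE negb_or => /andP[yu up] /andP[xy yp].
rewrite IH 1?eq_sym // /del_edge /= xy (negbTE xu) /=.
by rewrite (eq_sym y) (negbTE yu) andbF.
Qed.

Lemma last_in_split_side u a p : uniq (u :: a :: p) -> path E a p ->
  last a p \in split_side E u a.
Proof.
rewrite /= inE negb_or => /andP[/andP[ua up] _] a_path.
by rewrite inE; apply/connectP; exists p; rewrite // path_del_edge 1?eq_sym.
Qed.

Hypothesis E_connected : forall x y, connect E x y.

Lemma exists_simple_path_from u y : y != u ->
  exists a p, [/\ E u a, path E a p, last a p = y & uniq (u :: a :: p)].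
Proof.
case/connectP: (E_connected u y) => p u_path ->.
case/shortenP: u_path => [[|a p'] /=]; first by rewrite eqxx.
by case/andP=> ua a_path p_uniq _ _; exists a, p'.
Qed.

Lemma split_sides_cover u v y : y != u -> y != v ->
  (exists2 a, E u a && (a != v) & y \in split_side E u a) \/
  (exists2 c, E v c && (c != u) & y \in split_side E v c).
Proof.
move=> yu yv; have [a [p [ua a_path ly p_uniq]]] := exists_simple_path_from yu.
have [av | av] := eqVneq a v; last first.
  by left; exists a; [rewrite ua av | rewrite -ly; apply: last_in_split_side].
subst a; case: p a_path ly p_uniq => [_ /= vy | c p /andP[vc c_path] ly].
  by rewrite vy eqxx in yv.
case/andP=> u_notin vcp_uniq.
have cu : c != u by apply: contraNneq u_notin => <-; rewrite !inE eqxx orbT.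
by right; exists c; [rewrite vc cu | rewrite -ly; apply: last_in_split_side].
Qed.

End EdgeSides.

Definition edge_side_labels (V X : finType) (E : rel V) (lab : X -> V) (u v : V)
  : {set X} :=
  [set x | (lab x == u)
           || [exists a, [&& E u a, a != v & lab x \in split_side E u a]]].

Section PhylogeneticTree.
Variables (V X : finType) (E : rel V) (lab : X -> V).

Lemma leaf_nbr u v a : is_leaf E u -> E u v -> E u a -> a = v.
Proof.
move=> /cards1P[z nbrs] uv ua.
have : v \in [set w | E u w] by rewrite inE.
have : a \in [set w | E u w] by rewrite inE.
by rewrite nbrs !inE => /eqP -> /eqP ->.
Qed.

Lemma deg3_other_nbrs u v : E u v -> deg E u = 3 ->
  exists a b, a != b /\ [set w | E u w] :\ v = [set a; b].
Proof.
move=> uv; rewrite /deg (cardsD1 v) inE uv => deg_u.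
by apply/cards2P; apply/eqP; lia.
Qed.

Lemma half_w_ge_pair u v a b : a != b -> [set w | E u w] :\ v = [set a; b] ->
  nlab lab (split_side E u a) * nlab lab (split_side E u b) <= half_w E lab u v.
Proof.
move=> ab nbrs; rewrite /half_w (bigD1 [set a; b]) /=; last first.
  by rewrite nbrs subxx cards2 ab.
by rewrite big_setU1 ?inE //= big_set1 leq_addr.
Qed.

Hypotheses (E_irr : irreflexive E) (E_connected : forall x y, connect E x y).
Hypotheses (E_acyclic : acyclic E) (lab_inj : injective lab).
Hypothesis leafP : forall v, is_leaf E v <-> exists x, lab x = v.
Hypothesis degP : forall v, ~~ is_leaf E v -> deg E v = 3.

Lemma split_side_has_leaf u a : E u a ->
  exists2 y, is_leaf E y & y \in split_side E u a.
Proof.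
move=> ua; have ua_uniq : uniq [:: u; a].
  by rewrite /= inE andbT; apply: contraTneq ua => ->; rewrite E_irr.
have [|||q [q_uniq q_path low]] :=
  path_to_low_degree E_irr E_acyclic (n := #|V|) (x := u) (p := [:: a]).
- exact: leq_addl.
- exact: ua_uniq.
- by rewrite /= ua.
exists (last a q).
  by apply: contraTT low => /degP ->.
by apply: last_in_split_side q_uniq _; case/andP: q_path.
Qed.

Lemma nlab_split_side_gt0 u a : E u a -> 0 < nlab lab (split_side E u a).
Proof.
move=> /split_side_has_leaf[y /leafP[x <-] x_in].
by apply/card_gt0P; exists x; rewrite inE.
Qed.

Lemma edge_side_labels_cover u v :
  [set: X] \subset edge_side_labels E lab u v :|: edge_side_labels E lab v u.
Proof.
apply/subsetP => x _; rewrite !inE.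
have [-> // | xu] := eqVneq (lab x) u; have [-> | xv] := eqVneq (lab x) v.
  by rewrite /= orbT.
case: (split_sides_cover E_connected xu xv) => [[a uav x_in] | [c vcu x_in]].
  by apply/orP; left; apply/orP; right; apply/existsP; exists a; rewrite andbA uav.
by apply/orP; right; apply/orP; right; apply/existsP; exists c; rewrite andbA vcu.
Qed.

Lemma card_edge_side_labels u v : E u v ->
  #|edge_side_labels E lab u v| <= (half_w E lab u v).+1.
Proof.
move=> uv; have [u_leaf | u_inner] := boolP (is_leaf E u).
  apply: (@leq_trans #|[set x | lab x == u]|); last first.
    apply/(leq_trans _ (ltn0Sn _))/card_le1_eqP => x y; rewrite !inE.
    by move=> /eqP lx /eqP ly; apply: lab_inj; rewrite lx ly.
  apply/subset_leq_card/subsetP => x; rewrite !inE.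
  case/orP=> [// | /existsP[a /and3P[ua av _]]].
  by rewrite (leaf_nbr u_leaf uv ua) eqxx in av.
have [a [b [ab nbrs]]] := deg3_other_nbrs uv (degP u_inner).
have [ua ub] : E u a /\ E u b.
  have : a \in [set w | E u w] :\ v by rewrite nbrs set21.
  have : b \in [set w | E u w] :\ v by rewrite nbrs set22.
  by rewrite !inE => /andP[_ ->] /andP[_ ->].
set A := [set x | lab x \in split_side E u a].
set B := [set x | lab x \in split_side E u b].
have sub : edge_side_labels E lab u v \subset A :|: B.
  apply/subsetP => x; rewrite !inE.
  case/orP=> [/eqP lab_x | /existsP[c /and3P[uc cv x_in]]].
    by case/negP: u_inner; apply/leafP; exists x.
  have : c \in [set w | E u w] :\ v by rewrite !inE cv uc.
  rewrite nbrs !inE => /orP[] /eqP c_eq;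
    by move: x_in; rewrite c_eq inE => ->; rewrite ?orbT.
apply: leq_trans (subset_leq_card sub) _.
apply: leq_trans (leq_card_setU A B) _.
rewrite -addn1; apply: leq_trans (leq_addn_muln1 _ _) _.
- exact: nlab_split_side_gt0 ua.
- exact: nlab_split_side_gt0 ub.
by rewrite leq_add2r; apply: half_w_ge_pair.
Qed.

End PhylogeneticTree.

Theorem proposition2p11 (V X : finType) (E : rel V) (lab : X -> V) :
  phylo_tree E lab -> 4 <= #|X| ->
  forall u v : V, E u v -> #|X| - 2 <= quartet_w E lab u v.
Proof.
move=> [[E_sym E_irr E_connected E_acyclic] lab_inj leafP degP] _ u v uv.
have vu : E v u by rewrite E_sym.
have cover := subset_leq_card (edge_side_labels_cover lab E_connected u v).
have := leq_trans cover (leq_card_setU _ _); rewrite cardsT.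
have := card_edge_side_labels E_irr E_acyclic lab_inj leafP degP uv.
have := card_edge_side_labels E_irr E_acyclic lab_inj leafP degP vu.
by rewrite /quartet_w; lia.
Qed.
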